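(* Let $d$ and $h$ be positive integers with $d\geq\frac{4}{3}\cdot 2^{2h-1}+h-1$. Let $T$ be the rooted tree of depth $d$ in which the root has exactly $5$ children and every non-root vertex at depth less than $d$ has exactly $4$ children (so $T$ has maximum degree $5$). Let $S$ be a set of $5\cdot 4^{d-h-1}$ leaves of $T$ that contains exactly one descendant of every vertex of depth $d-h$. Then $S$ is an exponential dominating set of $T$; in particular $\gamma_e(T)\leq 5\cdot 4^{d-h-1}$.
   Context: The depth of a vertex in a rooted tree is its distance from the root, and the depth of the tree is the maximum depth of a vertex. For a graph $G$, a set $S\subseteq V(G)$, and vertices $u,v$ with $u\in S$ or $v\in S$, ${\rm dist}_{(G,S)}(u,v)$ is the minimum number of edges of a path $P$ in $G$ between $u$ and $v$ such that $S$ contains exactly one endvertex of $P$ and no internal vertex of $P$, and $\infty$ if no such path exists (so ${\rm dist}_{(G,S)}(u,u)=0$ for $u\in S$). For $u\in V(G)$, $w_{(G,S)}(u)=\sum_{v\in S}(1/2)^{{\rm dist}_{(G,S)}(u,v)-1}$ with $(1/2)^{\infty}=0$. $S$ is an exponential dominating set of $G$ if $w_{(G,S)}(u)\geq 1$ for every $u\in V(G)$, and $\gamma_e(G)$ is the minimum cardinality of an exponential dominating set of $G$. *)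

From HB Require Import structures.
From mathcomp Require Import all_boot all_order all_algebra.
Set Implicit Arguments. Unset Strict Implicit. Unset Printing Implicit Defensive.
Import Order.TTheory GRing.Theory Num.Theory.

Section ExpDom.
Variables (V : finType) (e : rel V).

(* A path with [n] edges from [u] to [v] (vertex sequence u :: p, no repeated
   vertices) such that S contains exactly one endvertex and no internal vertex. *)
Definition admissible_path (S : {set V}) (u v : V) (n : nat) (p : seq V) : bool :=
  [&& path e u p, last u p == v, uniq (u :: p), size p == n,
      #|[set u; v] :&: S| == 1 &
      all (fun x => x \notin S) (take (size p).-1 p)].

Definition has_admissible_path (S : {set V}) (u v : V) (n : nat) : bool :=
  [exists t : n.-tuple V, admissible_path S u v n (val t)].

(* dist_(G,S)(u,v) : Some n, or None standing for infinity.  Paths without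
   repeated vertices have fewer than #|V| edges, so searching n < #|V| suffices. *)
Definition distS (S : {set V}) (u v : V) : option nat :=
  let k := find (has_admissible_path S u v) (iota 0 #|V|) in
  if k < #|V| then Some k else None.

Definition expweight (S : {set V}) (u : V) : rat :=
  \sum_(v in S)
    match distS S u v with
    | Some n => ((1 / 2 : rat) ^ (n%:Z - 1))%R
    | None => 0%R
    end.

Definition exp_dominating (S : {set V}) : Prop :=
  forall u : V, (1 <= expweight S u)%R.

Definition exp_dominating_b (S : {set V}) : bool :=
  [forall u : V, (1 <= expweight S u)%R].

(* gamma_e : minimum cardinality of an exponential dominating set
   (V itself is always exponential dominating, so #|V| is a valid default). *)
Definition gamma_e : nat :=
  \big[minn/#|V|]_(S : {set V} | exp_dominating_b S) #|S|.

End ExpDom.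

(* A vertex at depth k is encoded as (k, f) where f 0, ..., f (k-1) are the
   child indices along the path from the root: f 0 < 5 (root has 5 children)
   and f i < 4 for i >= 1 (other internal vertices have 4 children);
   entries f i for i >= k are padded with 0. *)
Definition tvalid {d : nat} (x : 'I_d.+1 * {ffun 'I_d -> 'I_5}) : bool :=
  [forall i : 'I_d, ((x.1 <= i)%N ==> (x.2 i == ord0)) &&
                    ((0 < i)%N ==> (x.2 i < 4)%N)].

Definition Tvert (d : nat) := {x : 'I_d.+1 * {ffun 'I_d -> 'I_5} | tvalid x}.

Definition depth (d : nat) (x : Tvert d) : nat := (val x).1.

Definition descendant (d : nat) (x y : Tvert d) : bool :=
  (depth x <= depth y)%N &&
  [forall i : 'I_d, ((i < depth x)%N ==> ((val x).2 i == (val y).2 i))].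

Definition tchild (d : nat) (x y : Tvert d) : bool :=
  (depth y == (depth x).+1) && descendant x y.

Definition Tedge (d : nat) : rel (Tvert d) := fun x y => tchild x y || tchild y x.

Definition is_leaf (d : nat) (x : Tvert d) : bool := depth x == d.

(* A vertex of S gets weight 2 from itself.  For u outside S at depth k, each s in S is
   reached by climbing from u to the deepest common ancestor of u and s, at depth m(s), and
   descending to s; since S consists of leaves, no internal vertex of this path lies in S, so s
   contributes at least 2 * 4^m(s) / 2^(k+d).  Every vertex at depth 1 <= j <= d - h has exactly
   4^(d-h-j) leaves of S below it, which gives
     sum_s 4^m(s) >= |S| + min(k, d-h) * 3 * 4^(d-h-1),
   and the hypothesis on d makes the right-hand side at least 2^(k+d-1). *)

From HB Require Import structures.
From mathcomp Require Import all_boot all_order all_algebra.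
From mathcomp Require Import zify ring lra.
Import Order.TTheory GRing.Theory Num.Theory.
Set Implicit Arguments. Unset Strict Implicit. Unset Printing Implicit Defensive.

Lemma half_powz_anti (n L : nat) : (n <= L)%N ->
  ((1 / 2 : rat) ^ (L%:Z - 1) <= (1 / 2) ^ (n%:Z - 1))%R.
Proof.
move=> nL; have -> : (L%:Z - 1 = (n%:Z - 1) + (L - n)%N%:Z)%R by lia.
rewrite expfzDr // -exprnP; apply: ler_piMr; first exact: exprz_ge0.
exact: exprn_ile1.
Qed.

Section ExpWeight.
Variables (V : finType) (e : rel V) (S : {set V}).

Lemma has_admissible_path_fun (g : nat -> V) L u v :
  g 0 = u -> g L = v -> (forall i, (i < L)%N -> e (g i) (g i.+1)) ->
  {in iota 0 L.+1 &, injective g} -> #|[set u; v] :&: S| == 1%N ->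
  (forall i, (0 < i < L)%N -> g i \notin S) ->
  has_admissible_path e S u v L.
Proof.
move=> g0 gL g_edge g_inj uvS g_out.
have size_p : size (map g (iota 1 L)) == L by rewrite size_map size_iota.
apply/existsP; exists (Tuple size_p); rewrite /admissible_path /= size_p uvS /=.
have g_path : forall a n, (forall i, (a <= i < a + n)%N -> e (g i) (g i.+1)) ->
    path e (g a) (map g (iota a.+1 n)).
  move=> a n; elim: n a => [//|n IHn] a ga /=.
  rewrite ga ?leqnn ?addnS ?ltnS ?leq_addr //=; apply: IHn => i /andP[ai iL].
  by apply: ga; rewrite (ltnW ai) addnS -addSn.
rewrite -g0 g_path => [|i /andP[_]]; last exact: g_edge.
rewrite last_map (last_nth 0) size_iota -/(iota 0 L.+1) nth_iota //.
have p_uniq : uniq (g 0 :: map g (iota 1 L)).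
  by have := iota_uniq 0 L.+1; rewrite -(map_inj_in_uniq g_inj).
rewrite gL eqxx; move: p_uniq => /= -> /=.
apply/allP => x; rewrite size_map size_iota -map_take take_iota => /mapP[i].
by rewrite mem_iota => /andP[i1 iL] ->; apply: g_out; rewrite i1; lia.
Qed.

Lemma has_admissible_path_lt_card u v n :
  has_admissible_path e S u v n -> (n < #|V|)%N.
Proof.
case/existsP=> t /and5P[_ _ uniq_p /eqP size_t _].
by have := max_card (mem (u :: tval t)); rewrite (card_uniqP uniq_p) /= size_t.
Qed.

Lemma distS_le u v n : has_admissible_path e S u v n ->
  exists2 n', distS e S u v = Some n' & (n' <= n)%N.
Proof.
move=> adm; rewrite /distS; set a := has_admissible_path e S u v.
have find_le : (find a (iota 0 #|V|) <= n)%N.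
  rewrite leqNgt; apply/negP => /(before_find 0).
  by rewrite nth_iota ?add0n ?(has_admissible_path_lt_card adm) // /a adm.
rewrite (leq_ltn_trans find_le (has_admissible_path_lt_card adm)).
by exists (find a (iota 0 #|V|)).
Qed.

Definition dist_weight (o : option nat) : rat :=
  if o is Some n then ((1 / 2) ^ (n%:Z - 1))%R else 0%R.

Lemma expweightE u : expweight e S u = (\sum_(v in S) dist_weight (distS e S u v))%R.
Proof. by []. Qed.

Lemma dist_weight_ge0 o : (0 <= dist_weight o)%R.
Proof. by case: o => [n|] //=; apply: exprz_ge0. Qed.

Lemma dist_weight_ge u v n : has_admissible_path e S u v n ->
  ((1 / 2) ^ (n%:Z - 1) <= dist_weight (distS e S u v))%R.
Proof. by case/distS_le=> n' -> n'n; apply: half_powz_anti. Qed.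

Lemma expweight_ge_sum u (L : V -> nat) :
  (forall v, v \in S -> has_admissible_path e S u v (L v)) ->
  (\sum_(v in S) (1 / 2) ^ ((L v)%:Z - 1) <= expweight e S u)%R.
Proof. by move=> adm; rewrite expweightE; apply: ler_sum => v /adm/dist_weight_ge. Qed.

Lemma expweight_ge1_mem u : u \in S -> (1 <= expweight e S u)%R.
Proof.
move=> uS; rewrite expweightE (bigD1 u) //=.
have adm0 : has_admissible_path e S u u 0.
  apply: (@has_admissible_path_fun (fun=> u)) => // [i j||i]; last lia.
    by rewrite !mem_iota; lia.
  by rewrite setUid (setIidPl _) ?cards1 ?sub1set.
have rest_ge0 : (0 <= \sum_(v in S | v != u) dist_weight (distS e S u v))%R.
  by apply: sumr_ge0 => v _; apply: dist_weight_ge0.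
have := dist_weight_ge adm0; have -> : ((1 / 2 : rat) ^ (0%:Z - 1) = 2)%R by [].
by move=> w2; lra.
Qed.

Lemma gamma_e_le_card : exp_dominating e S -> (gamma_e e <= #|S|)%N.
Proof.
move=> dom; rewrite /gamma_e.
have : S \in index_enum {set V} by rewrite mem_index_enum.
have : exp_dominating_b e S by apply/forallP.
elim: (index_enum _) => // X r IHr domS; rewrite inE big_cons.
case/orP=> [/eqP <-|Sr]; first by rewrite domS geq_minl.
by case: ifP => _; rewrite ?geq_min IHr ?orbT.
Qed.

End ExpWeight.

Section TreeCoordinates.
Variable d : nat.
Implicit Types (x y s : Tvert d) (i j : nat).

(* The child index chosen at depth [i] on the way from the root to [x],
   as a natural number; [0] beyond the depth of [x]. *)
Definition tcoord x i : nat := if insub i is Some j then (val x).2 j else 0.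

Lemma tcoord_ord x (i : 'I_d) : tcoord x i = (val x).2 i.
Proof. by rewrite /tcoord valK. Qed.

Lemma tcoord_ge_depth x i : (depth x <= i)%N -> tcoord x i = 0.
Proof.
rewrite /tcoord; case: insubP => [j _ <-|//].
case: x => [[k f] vx]; rewrite /depth /= => kj.
by move/forallP/(_ j): vx => /andP[/implyP/(_ kj)/eqP -> _].
Qed.

Lemma tcoord_lt x i : (tcoord x i < (if i == 0 then 5 else 4))%N.
Proof.
rewrite /tcoord; case: insubP => [j _ <-|_]; last by case: (i == 0).
case: x => [[k f] /forallP/(_ j) /andP[_]] /=.
by case: (nat_of_ord j) => [|n] //= /implyP; apply.
Qed.

Lemma depth_le x : (depth x <= d)%N.
Proof. by rewrite /depth -ltnS. Qed.

Lemma vert_eq x y : depth x = depth y -> (forall i, tcoord x i = tcoord y i) -> x = y.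
Proof.
case: x y => [[k f] vx] [[k' f'] vy] dxy cxy; apply: val_inj => /=.
congr pair; first exact: ord_inj.
by apply/ffunP => i; apply: ord_inj; have := cxy i; rewrite !tcoord_ord.
Qed.

Lemma descendantP x y : reflect
  ((depth x <= depth y)%N /\ (forall i, (i < depth x)%N -> tcoord x i = tcoord y i))
  (descendant x y).
Proof.
apply: (iffP andP) => -[xy cxy]; split => //.
  move=> i ix; have id : (i < d)%N by apply: leq_trans ix (depth_le x).
  move/forallP/(_ (Ordinal id))/implyP/(_ ix)/eqP: cxy => cxy.
  by rewrite -[i]/(nat_of_ord (Ordinal id)) !tcoord_ord cxy.
by apply/forallP => i; apply/implyP => ix; apply/eqP/ord_inj; rewrite -!tcoord_ord cxy.
Qed.

(* Child indices are clamped to their bounds, so that any [f] gives a vertex. *)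
Definition mkfun k (f : nat -> nat) : {ffun 'I_d -> 'I_5} :=
  [ffun i : 'I_d => if (i < k)%N then inord (minn (f i) (if i == 0 :> nat then 4 else 3))
                    else ord0].

Lemma mkfun_valid k f : tvalid (inord (minn k d), mkfun k f).
Proof.
apply/forallP => i /=; rewrite inordK ?ltnS ?geq_minr // ffunE.
apply/andP; split; apply/implyP => ik.
  by rewrite ifF //; apply/negbTE; rewrite -leqNgt; move: ik (ltn_ord i); lia.
case: ifP => _ //=; have -> : (i == 0 :> nat) = false by lia.
by rewrite inordK; lia.
Qed.

Definition mkvert k f : Tvert d := exist tvalid _ (mkfun_valid k f).

Lemma depth_mkvert k f : depth (mkvert k f) = minn k d.
Proof. by rewrite /depth /= inordK // ltnS geq_minr. Qed.

Lemma tcoord_mkvert k f i : (i < d)%N ->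
  tcoord (mkvert k f) i = if (i < k)%N then minn (f i) (if i == 0 then 4 else 3) else 0.
Proof.
move=> id; rewrite (tcoord_ord _ (Ordinal id)) /= ffunE /=.
by case: ifP => // _; rewrite inordK //; case: (i == 0); lia.
Qed.

(* The ancestor of [x] at depth [j] ([x] itself when [j >= depth x]). *)
Definition anc x j : Tvert d := mkvert (minn j (depth x)) (tcoord x).

Lemma depth_anc x j : depth (anc x j) = minn j (depth x).
Proof. by rewrite depth_mkvert; apply/minn_idPl; rewrite geq_min depth_le orbT. Qed.

Lemma depth_anc_le x j : (j <= depth x)%N -> depth (anc x j) = j.
Proof. by move=> jx; rewrite depth_anc; apply/minn_idPl. Qed.

Lemma tcoord_anc x j i : tcoord (anc x j) i = if (i < j)%N then tcoord x i else 0.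
Proof.
case: (ltnP i (depth x)) => ix; last first.
  by rewrite !tcoord_ge_depth ?if_same // depth_anc; lia.
rewrite tcoord_mkvert ?leq_min ?ix ?andbT; last exact: leq_trans ix (depth_le x).
by case: ifP => // _; apply/minn_idPl; have := tcoord_lt x i; case: (i == 0).
Qed.

Lemma anc_id x j : (depth x <= j)%N -> anc x j = x.
Proof.
move=> xj; apply: vert_eq; first by rewrite depth_anc; apply/minn_idPr.
by move=> i; rewrite tcoord_anc; case: ltnP => // ji; rewrite tcoord_ge_depth // (leq_trans xj).
Qed.

Lemma anc_descendant x j j' : (j <= j')%N -> descendant (anc x j) (anc x j').
Proof.
move=> jj'; apply/descendantP; rewrite !depth_anc; split; first lia.
by move=> i; rewrite leq_min => /andP[ij _]; rewrite !tcoord_anc ij (leq_trans ij jj').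
Qed.

Lemma anc_descendant_self x j : descendant (anc x j) x.
Proof.
apply/descendantP; rewrite depth_anc; split; first exact: geq_minr.
by move=> i; rewrite leq_min tcoord_anc => /andP[-> _].
Qed.

Lemma anc0_descendant x y : descendant (anc x 0) y.
Proof. by apply/descendantP; rewrite depth_anc; split; [lia | move=> i; lia]. Qed.

Lemma anc_of_descendant x y : descendant x y -> anc y (depth x) = x.
Proof.
case/descendantP=> xy cxy; apply: vert_eq; first by rewrite depth_anc; apply/minn_idPl.
by move=> i; rewrite tcoord_anc; case: ltnP => ix; [rewrite cxy | rewrite tcoord_ge_depth].
Qed.

Lemma anc_descendant_le x y j j' : (j' <= j)%N ->
  descendant (anc x j) y -> descendant (anc x j') y.
Proof.
move=> j'j /descendantP[jy cjy]; apply/descendantP; split.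
  by apply: leq_trans jy; rewrite !depth_anc; lia.
move=> i; rewrite depth_anc => ij'; rewrite -cjy ?depth_anc; last lia.
by rewrite !tcoord_anc ifT ?ifT //; lia.
Qed.

Lemma Tedge_anc x j : (j < depth x)%N ->
  Tedge (anc x j) (anc x j.+1) /\ Tedge (anc x j.+1) (anc x j).
Proof.
move=> jx; have child_j : tchild (anc x j) (anc x j.+1).
  by rewrite /tchild !depth_anc anc_descendant // andbT; apply/eqP; lia.
by rewrite /Tedge child_j orbT.
Qed.

Definition child x c : Tvert d :=
  mkvert (depth x).+1 (fun i => if i == depth x then c else tcoord x i).

Lemma descendant_child x s c : (0 < depth x < d)%N -> (c < 4)%N -> depth s = d ->
  descendant (child x c) s = descendant x s && (tcoord s (depth x) == c).
Proof.
move=> /andP[x0 xd] c4 sd.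
have depth_c : depth (child x c) = (depth x).+1 by rewrite depth_mkvert; apply/minn_idPl.
have tcoord_c i : (i <= depth x)%N ->
    tcoord (child x c) i = if i == depth x then c else tcoord x i.
  move=> ix; rewrite tcoord_mkvert ?ltnS ?ix; last lia.
  case: eqP => [->|_]; first by rewrite ifF; [apply/minn_idPl; lia | lia].
  by apply/minn_idPl; have := tcoord_lt x i; case: (i == 0); lia.
apply/idP/idP => [/descendantP[_ ccs]|/andP[/descendantP[_ cxs] /eqP sx]].
  rewrite -ccs ?depth_c // tcoord_c // !eqxx andbT; apply/descendantP.
  split=> [|i ix]; first by rewrite sd depth_le.
  by rewrite -ccs ?depth_c ?tcoord_c ?ifN_eqC //; lia.
apply/descendantP; rewrite depth_c sd; split => // i; rewrite ltnS => ix.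
by rewrite tcoord_c //; case: eqP => [->|ne] //; apply: cxs; lia.
Qed.

End TreeCoordinates.

Section LeafPath.
Variables (d : nat) (S : {set Tvert d}) (u s : Tvert d) (m : nat).
Hypotheses (S_leaves : forall x, x \in S -> depth x = d) (uNS : u \notin S) (sS : s \in S).
Hypotheses (m_le : (m <= depth u)%N) (m_desc : descendant (anc u m) s)
  (m_max : forall j, (m < j <= depth u)%N -> ~~ descendant (anc u j) s).

(* Up from [u] to its ancestor at depth [m], then down to [s]. *)
Definition walk i :=
  if (i <= depth u - m)%N then anc u (depth u - i) else anc s (m + (i - (depth u - m))).

Lemma anc_s_m_eq : anc s m = anc u m.
Proof. by have := anc_of_descendant m_desc; rewrite depth_anc_le. Qed.

Lemma m_lt_d : (m < d)%N.
Proof.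
rewrite ltnNge; apply/negP => dm; have um : depth u = m by have := depth_le u; lia.
have /anc_of_descendant : descendant u s by rewrite -(anc_id (x := u) (j := m)) ?um.
rewrite anc_id => [su|]; last by rewrite (S_leaves sS) um.
by move: uNS; rewrite -su sS.
Qed.

Lemma walk_down i : (depth u - m <= i)%N -> walk i = anc s (m + (i - (depth u - m))).
Proof.
move=> ki; rewrite /walk; case: leqP => // ik; have -> : i = depth u - m by lia.
by rewrite subnn addn0 anc_s_m_eq; congr anc; lia.
Qed.

Lemma depth_walk i : (i <= depth u - m + (d - m))%N ->
  depth (walk i) = if (i <= depth u - m)%N then depth u - i else m + (i - (depth u - m)).
Proof.
move=> iL; have du := depth_le u; case: leqP => ik.
  by rewrite /walk ik depth_anc_le //; lia.
by rewrite walk_down ?(ltnW ik) // depth_anc_le // (S_leaves sS); lia.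
Qed.

Lemma Tedge_walk i : (i < depth u - m + (d - m))%N -> Tedge (walk i) (walk i.+1).
Proof.
move=> iL; have du := depth_le u; have ds := S_leaves sS.
case: (ltnP i (depth u - m)) => ik.
  rewrite /walk (ltnW ik) ik (_ : depth u - i = (depth u - i.+1).+1); last lia.
  by apply: (proj2 (Tedge_anc _)); lia.
rewrite !walk_down ?(leqW ik) // (_ : m + (i.+1 - _) = (m + (i - (depth u - m))).+1); last lia.
by apply: (proj1 (Tedge_anc _)); lia.
Qed.

Lemma descendant_walk i : (i <= depth u - m + (d - m))%N ->
  descendant (walk i) s = (depth u - m <= i)%N.
Proof.
move=> iL; case: leqP => ik; first by rewrite walk_down // anc_descendant_self.
by rewrite /walk (ltnW ik); apply/negbTE/m_max; lia.
Qed.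

Lemma walk_inj : {in iota 0 (depth u - m + (d - m)).+1 &, injective walk}.
Proof.
move=> i j; rewrite !mem_iota !add0n !ltnS => /andP[_ iL] /andP[_ jL] wij.
have := congr1 (@depth d) wij; have := congr1 (fun x => descendant x s) wij.
rewrite /= !descendant_walk // !depth_walk //.
by case: (ltngtP i (depth u - m)); case: (ltngtP j (depth u - m)); lia.
Qed.

Lemma walk_interior_notin i : (0 < i < depth u - m + (d - m))%N -> walk i \notin S.
Proof.
move=> iL; apply/negP => /S_leaves; rewrite depth_walk; last lia.
by have du := depth_le u; case: leqP; lia.
Qed.

Lemma leaf_path_admissible :
  has_admissible_path (@Tedge d) S u s (depth u - m + (d - m)).
Proof.
apply: (has_admissible_path_fun _ _ Tedge_walk walk_inj _ walk_interior_notin).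
- by rewrite /walk leq0n subn0 anc_id.
- by rewrite walk_down ?leq_addr // anc_id // S_leaves //; lia.
- suff -> : [set u; s] :&: S = [set s] by rewrite cards1.
  apply/setP => x; rewrite !inE; case: (x =P s) => [->|_]; first by rewrite sS orbT.
  by case: (x =P u) => [->|] //=; rewrite (negbTE uNS).
Qed.

End LeafPath.

Lemma card_leaves_below d D (S : {set Tvert d}) :
  (forall s, s \in S -> depth s = d) -> (D <= d)%N ->
  (forall v : Tvert d, depth v = D -> #|[set s in S | descendant v s]| = 1%N) ->
  forall n (x : Tvert d), depth x + n = D -> (0 < depth x)%N ->
  #|[set s in S | descendant x s]| = 4 ^ n.
Proof.
move=> S_leaves Dd S_one; elim=> [|n IHn] x xn x0; first by rewrite S_one // -xn addn0.
rewrite -sum1_card (partition_big (fun s => inord (tcoord s (depth x)) : 'I_4) predT) //=.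
rewrite (eq_bigr (fun=> 4 ^ n)) => [|c _]; first by rewrite sum_nat_const card_ord expnS.
have depth_c : depth (child x c) = (depth x).+1 by rewrite depth_mkvert; apply/minn_idPl; lia.
rewrite -(IHn (child x c)) ?depth_c; [|lia|lia].
rewrite sum1_card; apply: eq_card => s; rewrite [in LHS]unfold_in /= !inE.
have xd : (0 < depth x < d)%N by lia.
case sS: (s \in S) => //=; rewrite descendant_child ?ltn_ord //; last exact: S_leaves.
congr andb; rewrite -(inj_eq val_inj) /= inordK //.
by have := tcoord_lt s (depth x); rewrite ifN //; lia.
Qed.

Lemma pow4_layers m k : (m <= k)%N ->
  4 ^ m = 1 + \sum_(j < k) (if (j < m)%N then 3 * 4 ^ j else 0).
Proof.
elim: k m => [|k IHk] m mk; first by rewrite (_ : m = 0) ?big_ord0 //; lia.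
rewrite big_ord_recr /=; case: (leqP m k) => mk'; first by rewrite IHk // addn0.
have -> : m = k.+1 by lia.
rewrite addnA (eq_bigr (fun j : 'I_k => if (j < k)%N then 3 * 4 ^ j else 0)).
  by rewrite -IHk // expnS mulSn.
by move=> j _; rewrite ltn_ord ltnS (ltnW (ltn_ord j)).
Qed.

Lemma sum_ord_lt_const k D c : \sum_(j < k) (if (j < D)%N then c else 0) = minn k D * c.
Proof.
elim: k => [|k IHk]; first by rewrite big_ord0 min0n.
by rewrite big_ord_recr /= IHk; case: ltnP => kD; rewrite ?addn0 1?addnC -?mulSn; congr muln; lia.
Qed.

Lemma sum_pow4_ge (T : finType) (S : {set T}) (m : T -> nat) k D :
  (forall s, s \in S -> (m s <= k)%N) ->
  (forall j, (j < minn k D)%N -> #|[set s in S | (j < m s)%N]| = 4 ^ (D - j.+1)) ->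
  (#|S| + minn k D * (3 * 4 ^ (D - 1)) <= \sum_(s in S) 4 ^ m s)%N.
Proof.
move=> mk layer_card.
rewrite (eq_bigr _ (fun s sS => pow4_layers (mk s sS))) big_split /= sum1_card leq_add2l.
rewrite exchange_big /= -sum_ord_lt_const; apply: leq_sum => j _.
case: ifP => // jD; rewrite -big_mkcondr sum_nat_const /=.
have -> : #|(fun s => (s \in S) && (j < m s)%N)| = 4 ^ (D - j.+1).
  by rewrite -layer_card; [apply: eq_card => s; rewrite !inE | rewrite leq_min ltn_ord].
by rewrite mulnCA -expnD leq_pmul2l // leq_exp2l //; lia.
Qed.

Definition meet_depth d (u s : Tvert d) : nat :=
  \max_(j < (depth u).+1 | descendant (anc u j) s) j.

Section MeetDepth.
Variables (d : nat) (u s : Tvert d).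

Lemma meet_depth_max j : (j <= depth u)%N -> descendant (anc u j) s -> (j <= meet_depth u s)%N.
Proof. by move=> ju js; apply: (@leq_bigmax_cond _ _ _ (Ordinal (ju : j < (depth u).+1))). Qed.

Lemma meet_depth_spec : (meet_depth u s <= depth u)%N /\ descendant (anc u (meet_depth u s)) s.
Proof.
have [|j js jm] := @eq_bigmax_cond _ (fun j : 'I_(depth u).+1 => descendant (anc u j) s) val.
  by apply/card_gt0P; exists ord0; rewrite unfold_in /= anc0_descendant.
have -> : meet_depth u s = j by rewrite -jm.
by rewrite -ltnS ltn_ord; move: js; rewrite unfold_in.
Qed.

Lemma ltn_meet_depth j : (j < depth u)%N ->
  (j < meet_depth u s)%N = descendant (anc u j.+1) s.
Proof.
have [_ ms] := meet_depth_spec; move=> ju; apply/idP/idP => [jm|]; last exact: meet_depth_max.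
exact: anc_descendant_le jm ms.
Qed.

Lemma anc_gt_meet_depth j : (meet_depth u s < j <= depth u)%N -> ~~ descendant (anc u j) s.
Proof. by case/andP=> mj ju; apply/negP => /(meet_depth_max ju); lia. Qed.

End MeetDepth.

Lemma depth_bound_nat (d h : nat) : (0 < h)%N ->
  ((4%:R / 3%:R : rat) * 2%:R ^+ (2 * h - 1) + h%:R - 1 <= d%:R)%R ->
  (2 * 4 ^ h + 3 * h <= 3 * d + 3)%N.
Proof.
move=> h0 hd; have -> : (2 * 4 ^ h = 4 * 2 ^ (2 * h - 1))%N.
  have -> : (4 ^ h = 2 ^ (2 * h))%N by rewrite expnM.
  by rewrite -[4]/(2 ^ 2) -expnS -expnD; congr (2 ^ _); lia.
rewrite -(ler_nat rat) !natrD ?natrM !natrX.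
by move: hd; set X := (2%:R ^+ (2 * h - 1) : rat); lra.
Qed.

(* With [D = d - h]: for [k >= D] compare with [4 ^ d], for [k + h < D] with [2 * 4 ^ (D - 1)],
   and otherwise with [2 * 4 ^ (D - 1) * 2 ^ h]; the hypothesis on [d] is what is needed
   in the first and last case. *)
Lemma pow2_le_weight_bound d h k : (0 < h)%N -> (2 * 4 ^ h + 3 * h <= 3 * d + 3)%N ->
  (k <= d)%N ->
  (2 ^ (k + d) <= 2 * (5 * 4 ^ (d - h - 1) + minn k (d - h) * (3 * 4 ^ (d - h - 1))))%N.
Proof.
move=> h0 hd kd.
have pow4_ge : (3 * h + 1 <= 4 ^ h)%N by elim: (h) => // n IHn; rewrite expnS; lia.
have pow2_le4 : (2 ^ h <= 4 ^ h)%N by rewrite leq_exp2r.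
set D := d - h; set X := 4 ^ (D - 1).
have X2 : X = 2 ^ (2 * (D - 1)) by rewrite /X expnM.
rewrite (_ : 2 * _ = X * (2 * (5 + 3 * minn k D))); last by ring.
case: (leqP D k) => Dk.
  apply: (@leq_trans (2 ^ (2 * d))); first by rewrite leq_exp2l //; lia.
  rewrite (_ : 2 ^ (2 * d) = X * (4 * 4 ^ h)) ?leq_mul2l; last first.
    by rewrite expnM /X -expnS -expnD; congr (_ ^ _); rewrite /D; lia.
  by apply/orP; right; rewrite /D; lia.
case: (leqP (k + h + 1) D) => kD.
  apply: (@leq_trans (2 * X)); first by rewrite X2 -expnS leq_exp2l //; rewrite /D; lia.
  by rewrite mulnC leq_mul2l; apply/orP; right; lia.
rewrite (_ : 2 ^ (k + d) = X * (2 * 2 ^ (k + h + 1 - D))); last first.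
  by rewrite X2 -expnS -expnD; congr (2 ^ _); rewrite /D; lia.
rewrite leq_mul2l leq_mul2l /=; apply/orP; right.
apply: (@leq_trans (2 ^ h)); first by rewrite leq_exp2l //; lia.
by rewrite /D in Dk kD *; lia.
Qed.

Lemma half_powz_path_length k d m : (m <= k)%N -> (m < d)%N ->
  ((1 / 2 : rat) ^ ((k - m + (d - m))%N%:Z - 1) = (1 / 2) ^+ (k + d) * (2 * 4 ^ m)%N%:R)%R.
Proof.
move=> mk md; rewrite (_ : (_%:Z - 1 = (k - m + (d - m) - 1)%N%:Z)%R); last by lia.
rewrite -exprnP (_ : (k + d = (k - m + (d - m) - 1) + (2 * m + 1))%N); last by lia.
rewrite exprD -mulrA (_ : (2 * 4 ^ m = 2 ^ (2 * m + 1))%N); last by rewrite expnD expnM mulnC.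
by rewrite natrX -exprMn (_ : (1 / 2 : rat) * 2%:R = 1)%R ?expr1n ?mulr1.
Qed.

Section ExpDominatingTree.
Variables (d h : nat) (S : {set Tvert d}).
Hypotheses (h_gt0 : (0 < h)%N) (hd : (2 * 4 ^ h + 3 * h <= 3 * d + 3)%N).
Hypotheses (S_leaves : forall s, s \in S -> depth s = d) (S_card : #|S| = 5 * 4 ^ (d - h - 1)).
Hypothesis S_one : forall v : Tvert d, depth v = d - h ->
  #|[set s in S | descendant v s]| = 1%N.

Lemma sum_pow4_meet_depth_ge (u : Tvert d) :
  (#|S| + minn (depth u) (d - h) * (3 * 4 ^ (d - h - 1)) <=
   \sum_(s in S) 4 ^ meet_depth u s)%N.
Proof.
apply: sum_pow4_ge => [s _|j]; first by case: (meet_depth_spec u s).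
rewrite leq_min => /andP[ju jD].
rewrite -(@card_leaves_below d (d - h) S _ _ _ _ (anc u j.+1)) ?depth_anc_le ?leq_subr //; last lia.
by apply: eq_card => s; rewrite !inE ltn_meet_depth.
Qed.

Lemma expweight_ge1_notin (u : Tvert d) : u \notin S -> (1 <= expweight (@Tedge d) S u)%R.
Proof.
move=> uNS.
have path_to s : s \in S -> has_admissible_path (@Tedge d) S u s
    (depth u - meet_depth u s + (d - meet_depth u s)).
  move=> sS; have [mu ms] := meet_depth_spec u s.
  exact: leaf_path_admissible (@anc_gt_meet_depth _ u s).
have m_lt s : s \in S -> (meet_depth u s < d)%N.
  move=> sS; have [mu ms] := meet_depth_spec u s.
  exact: m_lt_d S_leaves uNS sS mu ms.
apply: le_trans (expweight_ge_sum path_to).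
rewrite (eq_bigr _ (fun s sS => half_powz_path_length (meet_depth_spec u s).1 (m_lt s sS))).
rewrite -mulr_sumr -natr_sum -big_distrr /=.
have pow2_le : (2 ^ (depth u + d) <= 2 * \sum_(s in S) 4 ^ meet_depth u s)%N.
  apply: leq_trans (pow2_le_weight_bound h_gt0 hd (depth_le u)) _.
  by rewrite leq_mul2l -S_card sum_pow4_meet_depth_ge.
rewrite -(ler_nat rat) in pow2_le.
apply: le_trans (ler_wpM2l (exprn_ge0 _ _) pow2_le) => //.
by rewrite natrX -exprMn (_ : (1 / 2 : rat) * 2%:R = 1)%R ?expr1n.
Qed.

End ExpDominatingTree.

Theorem mainTheorem15 (d h : nat) (hpos : (0 < h)%N) (dpos : (0 < d)%N)
  (hd : ((4%:R / 3%:R : rat) * 2%:R ^+ (2 * h - 1) + h%:R - 1 <= d%:R)%R)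
  (S : {set Tvert d})
  (Sleaves : forall s, s \in S -> is_leaf s)
  (Scard : #|S| = (5 * 4 ^ (d - h - 1))%N)
  (Sone : forall v : Tvert d, depth v = (d - h)%N ->
            #|[set s in S | descendant v s]| = 1%N) :
  exp_dominating (@Tedge d) S /\ (gamma_e (@Tedge d) <= 5 * 4 ^ (d - h - 1))%N.
Proof.
have S_leaves s : s \in S -> depth s = d by move/Sleaves/eqP.
have dom : exp_dominating (@Tedge d) S.
  move=> u; case: (boolP (u \in S)); first exact: expweight_ge1_mem.
  exact: expweight_ge1_notin hpos (depth_bound_nat hpos hd) S_leaves Scard Sone u.
by split; rewrite // -Scard gamma_e_le_card.
Qed.
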